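(* Let $R$ be a ring with identity and involution $*$, and let $a\in R$. The following conditions are equivalent: (1) $a$ is dual core invertible; (2) $R = a^*R \oplus a^{\circ}$ and $R = aR \oplus a^{\circ}$; (3) $R = a^*R + a^{\circ}$ and $R = aR \oplus a^{\circ}$; (4) $R = Ra \oplus {}^{\circ}(a^* )$ and $R = aR \oplus a^{\circ}$; (5) $R = Ra + {}^{\circ}(a^* )$ and $R = aR \oplus a^{\circ}$; (6) $R = a^*R \oplus a^{\circ}$ and $R = Ra \oplus {}^{\circ}a$; (7) $R = a^*R + a^{\circ}$ and $R = Ra \oplus {}^{\circ}a$; (8) $R = Ra \oplus {}^{\circ}(a^* )$ and $R = Ra \oplus {}^{\circ}a$; (9) $R = Ra + {}^{\circ}(a^* )$ and $R = Ra \oplus {}^{\circ}a$. In this case, $$a_{\oplus} = x_1^* a y_1 = x_1^* a y_2^2 a = x_2 a y_1 = x_2 a y_2^2 a,$$ where $x_1,x_2,y_1,y_2\in R$ are any elements with $1 = a^* x_1 + u_1 = x_2 a + u_2 = a y_1 + v_1 = y_2 a + v_2$ for some $u_2 \in {}^{\circ}(a^* )$, $v_2 \in {}^{\circ}a$ and $u_1, v_1 \in a^{\circ}$.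
   Context: An involution on $R$ satisfies $(a^* )^*=a$, $(ab)^*=b^*a^*$, $(a+b)^*=a^*+b^*$. An element $x\in R$ is a dual core inverse of $a$ if $axa=a$, $xR=a^*R$ and $Rx=Ra$; it is unique, denoted $a_{\oplus}$, and $a$ is then dual core invertible. For $c\in R$: $cR=\{cx: x\in R\}$, $Rc=\{xc:x\in R\}$, $c^{\circ}=\{x\in R: cx=0\}$ (right annihilator), ${}^{\circ}c=\{x\in R: xc=0\}$ (left annihilator). ''$R = A \oplus B$'' means $R=A+B$ with $A\cap B=\{0\}$. *)

From mathcomp Require Import all_boot all_algebra.
Set Implicit Arguments. Unset Strict Implicit. Unset Printing Implicit Defensive.
Import GRing.Theory.
Local Open Scope ring_scope.

Definition involution (R : pzRingType) (star : R -> R) : Prop :=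
  [/\ forall a, star (star a) = a,
      forall a b, star (a * b) = star b * star a
    & forall a b, star (a + b) = star a + star b].

Definition rprinc (R : pzRingType) (c : R) : R -> Prop := fun y => exists r, y = c * r.
Definition lprinc (R : pzRingType) (c : R) : R -> Prop := fun y => exists r, y = r * c.
Definition rann (R : pzRingType) (c : R) : R -> Prop := fun y => c * y = 0.
Definition lann (R : pzRingType) (c : R) : R -> Prop := fun y => y * c = 0.

Definition set_eq (R : pzRingType) (A B : R -> Prop) : Prop := forall y, A y <-> B y.

Definition sum_whole (R : pzRingType) (A B : R -> Prop) : Prop :=
  forall z : R, exists u v, [/\ A u, B v & z = u + v].
Definition dsum_whole (R : pzRingType) (A B : R -> Prop) : Prop :=
  sum_whole A B /\ (forall z : R, A z -> B z -> z = 0).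

Definition dual_core_inverse (R : pzRingType) (star : R -> R) (a x : R) : Prop :=
  [/\ a * x * a = a, set_eq (rprinc x) (rprinc (star a)) & set_eq (lprinc x) (lprinc a)].

Definition dual_core_invertible (R : pzRingType) (star : R -> R) (a : R) : Prop :=
  exists x, dual_core_inverse star a x.

(* If a ∈ abR and b ∈ Rab, then R = bR (+) a° and R = Ra (+) °b.  For b = a
   the converse holds, a ∈ a²R ∩ Ra² being group invertibility; for b = a^* the
   two memberships are exchanged by the involution, and each of the plain sums
   R = a^*R + a° and R = Ra + °(a^* ) already forces one of them.  So (2)-(9)
   all say that a is group invertible and a^* ∈ R a a^*, which is exactly dual
   core invertibility: if a^* = z a a^* and a = a a s = t a a, then z a s is a
   dual core inverse, and any dual core inverse x satisfies x a = z a,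
   x a s = x and x a t² a = x, whatever the witnesses z, s, t. *)
From mathcomp Require Import all_boot all_algebra.
Import GRing.Theory.
Local Open Scope ring_scope.
Set Implicit Arguments. Unset Strict Implicit.

Section Decompositions.

Variable R : pzRingType.
Implicit Types a b c d r v : R.

Lemma mul_split1r a b r v : 1 = b * r + v -> a * v = 0 -> a = a * b * r.
Proof. by move=> e av0; rewrite -mulrA -[LHS]mulr1 e mulrDr av0 addr0. Qed.

Lemma mul_split1l a b r v : 1 = r * a + v -> v * b = 0 -> b = r * a * b.
Proof. by move=> e vb0; rewrite -[LHS]mul1r e mulrDl vb0 addr0. Qed.

Lemma sum_rprinc_rann a b : sum_whole (rprinc b) (rann a) -> rprinc (a * b) a.
Proof.
by move=> /(_ 1) [_ [v [[r ->] av0 e]]]; exists r; exact: mul_split1r e av0.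
Qed.

Lemma dsum_rprinc_rann a b :
  rprinc (a * b) a -> lprinc (a * b) b -> dsum_whole (rprinc b) (rann a).
Proof.
move=> [r ar] [q bq]; split.
  move=> w; exists (b * (r * w)), (w - b * (r * w)); split.
  - by exists (r * w).
  - by rewrite /rann mulrBr !mulrA -ar subrr.
  - by rewrite addrC subrK.
by move=> _ [p ->] abp0; rewrite bq -!mulrA abp0 mulr0.
Qed.

Lemma rann_direct_eq a c d :
  (forall z, rprinc a z -> rann a z -> z = 0) ->
  rprinc a (c - d) -> a * c = a * d -> c = d.
Proof.
move=> direct acd e; apply/eqP; rewrite -subr_eq0; apply/eqP/direct => //.
by rewrite /rann mulrBr e subrr.
Qed.

Lemma dsum_rprinc_rann_group a :
  dsum_whole (rprinc a) (rann a) -> rprinc (a * a) a /\ lprinc (a * a) a.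
Proof.
move=> [sum_a direct]; have [s aas] := sum_rprinc_rann sum_a.
have asa : a = a * s * a.
  apply: rann_direct_eq direct _ _; first by exists (1 - s * a); rewrite mulrBr mulr1 mulrA.
  by rewrite !mulrA -aas.
have as_assa : a * s = a * s * s * a.
  apply: rann_direct_eq direct _ _; first by exists (s - s * s * a); rewrite mulrBr !mulrA.
  by rewrite !mulrA -aas -asa.
split; first by exists s.
by exists (a * s * s); rewrite [LHS]asa [in LHS]as_assa !mulrA.
Qed.

Lemma dsum_rprinc_rannP a :
  dsum_whole (rprinc a) (rann a) <-> rprinc (a * a) a /\ lprinc (a * a) a.
Proof.
by split=> [|[]]; [exact: dsum_rprinc_rann_group | exact: dsum_rprinc_rann].
Qed.

Lemma rprinc_trans c d y : rprinc d c -> rprinc c y -> rprinc d y.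
Proof. by move=> [r ->] [q ->]; exists (r * q); rewrite mulrA. Qed.

Lemma set_eq_rprinc c d :
  rprinc d c -> rprinc c d -> set_eq (rprinc c) (rprinc d).
Proof. by move=> dc cd y; split; apply: rprinc_trans. Qed.

End Decompositions.

Lemma sum_lprinc_lann (R : pzRingType) (a b : R) :
  sum_whole (lprinc a) (lann b) -> lprinc (a * b) b.
Proof. exact: (@sum_rprinc_rann R^c b a). Qed.

Lemma dsum_lprinc_lann (R : pzRingType) (a b : R) :
  rprinc (a * b) a -> lprinc (a * b) b -> dsum_whole (lprinc a) (lann b).
Proof. by move=> ar bl; exact: (@dsum_rprinc_rann R^c b a). Qed.

Lemma dsum_lprinc_lannP (R : pzRingType) (a : R) :
  dsum_whole (lprinc a) (lann a) <-> rprinc (a * a) a /\ lprinc (a * a) a.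
Proof. by have := @dsum_rprinc_rannP R^c a; tauto. Qed.

Lemma set_eq_lprinc (R : pzRingType) (c d : R) :
  lprinc d c -> lprinc c d -> set_eq (lprinc c) (lprinc d).
Proof. exact: (@set_eq_rprinc R^c). Qed.

Section DualCoreInverse.

Variables (R : pzRingType) (star : R -> R).
Hypothesis star_inv : involution star.

Let starK : forall a, star (star a) = a.
Proof. by case: star_inv. Qed.

Let starM : forall a b, star (a * b) = star b * star a.
Proof. by case: star_inv. Qed.

Variable a : R.

Lemma star_mul_star : star (a * star a) = a * star a.
Proof. by rewrite starM starK. Qed.

Lemma star_absorbed_of_rprinc r :
  a = a * star a * r -> star a = star r * (a * star a).
Proof. by move=> ar; rewrite {1}ar starM star_mul_star. Qed.

Lemma rprinc_star_absorbedP :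
  rprinc (a * star a) a <-> lprinc (a * star a) (star a).
Proof.
split=> [[r /star_absorbed_of_rprinc] | [r sar]]; first by exists (star r).
by exists (star r); rewrite -[LHS]starK {1}sar starM star_mul_star.
Qed.

Lemma dsum_rstar_rannP :
  dsum_whole (rprinc (star a)) (rann a) <-> lprinc (a * star a) (star a).
Proof.
split=> [[/sum_rprinc_rann /rprinc_star_absorbedP] // | sa].
by apply: dsum_rprinc_rann => //; apply/rprinc_star_absorbedP.
Qed.

Lemma sum_rstar_rannP :
  sum_whole (rprinc (star a)) (rann a) <-> lprinc (a * star a) (star a).
Proof.
by split=> [/sum_rprinc_rann /rprinc_star_absorbedP | /dsum_rstar_rannP []].
Qed.

Lemma dsum_lprinc_lannstarP :
  dsum_whole (lprinc a) (lann (star a)) <-> lprinc (a * star a) (star a).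
Proof.
split=> [[/sum_lprinc_lann] // | sa].
by apply: dsum_lprinc_lann => //; apply/rprinc_star_absorbedP.
Qed.

Lemma sum_lprinc_lannstarP :
  sum_whole (lprinc a) (lann (star a)) <-> lprinc (a * star a) (star a).
Proof.
by split=> [/sum_lprinc_lann // | /dsum_lprinc_lannstarP []].
Qed.

Section Absorbed.

Variable z : R.
Hypothesis sa : star a = z * (a * star a).

Lemma star_absorbed_herm : star (z * a) = z * a.
Proof.
have asz : a = a * star a * star z by rewrite -[LHS]starK {1}sa starM star_mul_star.
by rewrite starM {2}asz mulrA -sa.
Qed.

Lemma star_absorbed_reg : a * z * a = a.
Proof.
by rewrite -mulrA -star_absorbed_herm starM mulrA -star_mul_star -starM -sa starK.
Qed.

Lemma dci_of_group s t :
  a = a * a * s -> a = t * (a * a) -> dual_core_inverse star a (z * a * s).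
Proof.
move=> aas taa.
have as_ta : a * s = t * a by rewrite {2}aas mulrA -taa.
have asa : a * s * a = a by rewrite as_ta -mulrA -taa.
have xa : z * a * s * a = z * a by rewrite -!mulrA [a * (s * a)]mulrA asa.
split.
- by rewrite !mulrA star_absorbed_reg asa.
- apply: set_eq_rprinc.
  + by exists (star z * s); rewrite -star_absorbed_herm starM mulrA.
  + by exists (a * star a); rewrite mulrA xa -mulrA -sa.
- apply: set_eq_lprinc.
  + by exists (z * t); rewrite -mulrA as_ta mulrA.
  + exists (a * a); rewrite -!mulrA [a * (z * _)]mulrA [a * z * _]mulrA.
    by rewrite star_absorbed_reg mulrA -aas.
Qed.

End Absorbed.

Section Inverse.

Variable x : R.
Hypothesis dci : dual_core_inverse star a x.

Lemma dci_star_fixes : star (x * a) * x = x.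
Proof.
case: dci => axa /(_ x) [+ _] _; case; first by exists 1; rewrite mulr1.
by move=> r xr; rewrite starM {2}xr mulrA -!starM mulrA axa -xr.
Qed.

Lemma dci_herm : star (x * a) = x * a.
Proof.
have e : x * a = star (x * a) * (x * a) by rewrite mulrA dci_star_fixes.
by rewrite {1}e starM starK -e.
Qed.

Lemma dci_mulKx : x * a * x = x.
Proof. by rewrite -dci_herm dci_star_fixes. Qed.

Lemma dci_mulxK : x * x * a = x.
Proof.
case: dci => axa _ /(_ x) [+ _]; case; first by exists 1; rewrite mul1r.
by move=> t xt; rewrite {1}xt -!mulrA [a * (x * a)]mulrA axa -xt.
Qed.

Lemma dci_mulaaK : a * a * x = a.
Proof.
case: dci => _ _ /(_ a) [_ +]; case; first by exists 1; rewrite mul1r.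
by move=> w aw; rewrite {1}aw -!mulrA [x * (a * x)]mulrA dci_mulKx -aw.
Qed.

Lemma dci_star_absorbed : star a = x * (a * star a).
Proof.
case: dci => axa _ _.
by rewrite mulrA -dci_herm -starM mulrA axa.
Qed.

Lemma dci_group : rprinc (a * a) a /\ lprinc (a * a) a.
Proof.
split; first by exists x; rewrite dci_mulaaK.
case: dci => _ _ lx.
have [t xt] : lprinc a x by apply/(lx x).1; exists 1; rewrite mul1r.
have [w aw] : lprinc x a by apply/(lx a).2; exists 1; rewrite mul1r.
by exists (w * x * t); rewrite {1}aw -{1}dci_mulxK {2}xt !mulrA.
Qed.

Lemma dci_absorbed_eq z : star a = z * (a * star a) -> z * a = x * a.
Proof.
move=> sa; rewrite -(star_absorbed_herm sa) starM {1}dci_star_absorbed.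
rewrite -!mulrA -starM (star_absorbed_herm sa) [a * (z * a)]mulrA.
by rewrite (star_absorbed_reg sa).
Qed.

Lemma dci_mulr s : a = a * a * s -> x * a * s = x.
Proof.
move=> aas; rewrite -{1}dci_mulxK -!mulrA [a * (a * s)]mulrA -aas.
by rewrite mulrA dci_mulxK.
Qed.

Lemma dci_mull_sqr t : a = t * (a * a) -> x * a * t ^+ 2 * a = x.
Proof.
move=> taa; have ta : t * a = a * x by rewrite -{1}dci_mulaaK mulrA -taa.
rewrite expr2 -!mulrA ta [t * (a * x)]mulrA ta [a * (a * x * x)]mulrA.
by rewrite [a * (a * x)]mulrA dci_mulaaK mulrA dci_mulKx.
Qed.

Lemma dual_core_inverse_eq x1 x2 y1 y2 u1 u2 v1 v2 :
  rann a u1 -> lann (star a) u2 -> rann a v1 -> lann a v2 ->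
  1 = star a * x1 + u1 -> 1 = x2 * a + u2 ->
  1 = a * y1 + v1 -> 1 = y2 * a + v2 ->
  [/\ x = star x1 * a * y1, x = star x1 * a * y2 ^+ 2 * a,
      x = x2 * a * y1 & x = x2 * a * y2 ^+ 2 * a].
Proof.
move=> u1a u2a v1a v2a e1 e2 e3 e4.
have /dci_absorbed_eq -> := star_absorbed_of_rprinc (mul_split1r e1 u1a).
have /dci_absorbed_eq -> : star a = x2 * (a * star a).
  by rewrite mulrA; exact: mul_split1l e2 u2a.
have y2aa : a = y2 * (a * a) by rewrite mulrA; exact: mul_split1l e4 v2a.
by rewrite (dci_mulr (mul_split1r e3 v1a)) (dci_mull_sqr y2aa).
Qed.

End Inverse.

Lemma dual_core_invertibleP :
  dual_core_invertible star a <->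
  lprinc (a * star a) (star a) /\ (rprinc (a * a) a /\ lprinc (a * a) a).
Proof.
split=> [[x dci] | [[z sa] [[s aas] [t taa]]]].
  by split; [exists x; exact: dci_star_absorbed dci | exact: dci_group dci].
by exists (z * a * s); exact: (dci_of_group sa aas taa).
Qed.

End DualCoreInverse.

Theorem proposition2p12 (R : pzRingType) (star : R -> R) (a : R) :
  involution star ->
  let c1 := dual_core_invertible star a in
  let c2 := dsum_whole (rprinc (star a)) (rann a) /\ dsum_whole (rprinc a) (rann a) in
  let c3 := sum_whole (rprinc (star a)) (rann a) /\ dsum_whole (rprinc a) (rann a) in
  let c4 := dsum_whole (lprinc a) (lann (star a)) /\ dsum_whole (rprinc a) (rann a) in
  let c5 := sum_whole (lprinc a) (lann (star a)) /\ dsum_whole (rprinc a) (rann a) in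
  let c6 := dsum_whole (rprinc (star a)) (rann a) /\ dsum_whole (lprinc a) (lann a) in
  let c7 := sum_whole (rprinc (star a)) (rann a) /\ dsum_whole (lprinc a) (lann a) in
  let c8 := dsum_whole (lprinc a) (lann (star a)) /\ dsum_whole (lprinc a) (lann a) in
  let c9 := sum_whole (lprinc a) (lann (star a)) /\ dsum_whole (lprinc a) (lann a) in
  (c1 <-> c2) /\ (c1 <-> c3) /\ (c1 <-> c4) /\ (c1 <-> c5) /\ (c1 <-> c6) /\
  (c1 <-> c7) /\ (c1 <-> c8) /\ (c1 <-> c9) /\
    (forall x, dual_core_inverse star a x ->
      forall x1 x2 y1 y2 u1 u2 v1 v2 : R,
        rann a u1 -> lann (star a) u2 -> rann a v1 -> lann a v2 ->
        1 = star a * x1 + u1 -> 1 = x2 * a + u2 ->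
        1 = a * y1 + v1 -> 1 = y2 * a + v2 ->
        [/\ x = star x1 * a * y1, x = star x1 * a * y2 ^+ 2 * a,
            x = x2 * a * y1 & x = x2 * a * y2 ^+ 2 * a]).
Proof.
move=> inv; cbv zeta.
have := dual_core_invertibleP inv a.
have := sum_rstar_rannP inv a; have := dsum_rstar_rannP inv a.
have := sum_lprinc_lannstarP inv a; have := dsum_lprinc_lannstarP inv a.
have := dsum_rprinc_rannP a; have := dsum_lprinc_lannP a.
do 8 (split; first tauto).
exact: dual_core_inverse_eq.
Qed.
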